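(* Let $\Omega\subset\mathbb{R}^N$ be an open domain, let $g:\mathbb{R}^N\setminus\Omega\to\mathbb{R}$, and let $\mathcal{A}:\Omega\times\mathcal{X}\times\mathbb{R}\to\mathbb{R}$ satisfy assumptions (a), (b), (c) below, with associated operator $\mathfrak{a}$ and extensions $\overline{\mathfrak{a}},\underline{\mathfrak{a}},\overline{\mathcal{A}},\underline{\mathcal{A}}$. Let $u\in\overline{\mathcal{X}}$ with $u\ge g$ on $\mathbb{R}^N\setminus\Omega$. Then the following are equivalent: (i) for every $x\in\Omega$, $\mathcal{A}(x,\varphi,u(x))\ge0$ (equivalently $u(x)\ge\mathfrak{a}(x,\varphi)$) for all $\varphi\in\mathcal{X}$ with $\varphi\le u$; (ii) $u(x)\ge\overline{\mathfrak{a}}(x,u)$ for all $x\in\Omega$; (iii) $\overline{\mathcal{A}}(x,u,u(x))\ge0$ for all $x\in\Omega$. Analogously, if $u\in\overline{\mathcal{X}}$ with $u\le g$ on $\mathbb{R}^N\setminus\Omega$, the following are equivalent: (i') for every $x\in\Omega$, $\mathcal{A}(x,\varphi,u(x))\le0$ (equivalently $u(x)\le\mathfrak{a}(x,\varphi)$) for all $\varphi\in\mathcal{X}$ with $\varphi\ge u$; (ii') $u(x)\le\underline{\mathfrak{a}}(x,u)$ for all $x\in\Omega$; (iii') $\underline{\mathcal{A}}(x,u,u(x))\le0$ for all $x\in\Omega$.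
   Context: $\overline{\mathcal{X}}$ is the set of bounded functions $\mathbb{R}^N\to\mathbb{R}$, and $\mathcal{X}\subset\overline{\mathcal{X}}$ a fixed subset. Assumptions: (a) $\varphi_1\le\varphi_2$ implies $\mathcal{A}(x,\varphi_2,s)\le\mathcal{A}(x,\varphi_1,s)$; (b) $s_1\le s_2$ implies $\mathcal{A}(x,\varphi,s_1)\le\mathcal{A}(x,\varphi,s_2)$; (c) for every $(x,\varphi)$ the map $s\mapsto\mathcal{A}(x,\varphi,s)$ has exactly one zero, denoted $\mathfrak{a}(x,\varphi)$. For $\psi\in\overline{\mathcal{X}}$: $\overline{\mathfrak{a}}(x,\psi):=\sup\{\mathfrak{a}(x,\varphi):\varphi\in\mathcal{X},\varphi\le\psi\}$, $\underline{\mathfrak{a}}(x,\psi):=\inf\{\mathfrak{a}(x,\varphi):\varphi\in\mathcal{X},\varphi\ge\psi\}$, $\overline{\mathcal{A}}(x,\psi,s):=\inf\{\mathcal{A}(x,\varphi,s):\varphi\in\mathcal{X},\varphi\le\psi\}$, $\underline{\mathcal{A}}(x,\psi,s):=\sup\{\mathcal{A}(x,\varphi,s):\varphi\in\mathcal{X},\varphi\ge\psi\}$. (Conditions (i)/(i') are the test-function definition of viscosity super/subsolution of the DPP $\mathcal{A}(x,u,u(x))=0$ in $\Omega$, $u=g$ outside; (ii)-(iii)/(ii')-(iii') are the pointwise definition via the extended operators.) *)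

From HB Require Import structures.
From mathcomp Require Import all_boot all_order all_algebra.
From mathcomp Require Import all_classical all_reals all_analysis.
Set Implicit Arguments. Unset Strict Implicit. Unset Printing Implicit Defensive.
Import Order.TTheory GRing.Theory Num.Theory.
Import numFieldNormedType.Exports.
Local Open Scope classical_set_scope.
Local Open Scope ring_scope.

Definition Xbar (R : realType) (N : nat) : set ('rV[R]_N -> R) :=
  [set f | exists M : R, forall y, `|f y| <= M].

Definition fle (R : realType) (N : nat) (f g : 'rV[R]_N -> R) : Prop :=
  forall y, f y <= g y.

Definition abar (R : realType) (N : nat) (X : set ('rV[R]_N -> R))
  (a : 'rV[R]_N -> ('rV[R]_N -> R) -> R) (x : 'rV[R]_N) (psi : 'rV[R]_N -> R)
  : \bar R :=
  ereal_sup [set (a x phi)%:E | phi in [set phi | X phi /\ fle phi psi]].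

Definition aunder (R : realType) (N : nat) (X : set ('rV[R]_N -> R))
  (a : 'rV[R]_N -> ('rV[R]_N -> R) -> R) (x : 'rV[R]_N) (psi : 'rV[R]_N -> R)
  : \bar R :=
  ereal_inf [set (a x phi)%:E | phi in [set phi | X phi /\ fle psi phi]].

Definition Abar (R : realType) (N : nat) (X : set ('rV[R]_N -> R))
  (A : 'rV[R]_N -> ('rV[R]_N -> R) -> R -> R) (x : 'rV[R]_N)
  (psi : 'rV[R]_N -> R) (s : R) : \bar R :=
  ereal_inf [set (A x phi s)%:E | phi in [set phi | X phi /\ fle phi psi]].

Definition Aunder (R : realType) (N : nat) (X : set ('rV[R]_N -> R))
  (A : 'rV[R]_N -> ('rV[R]_N -> R) -> R -> R) (x : 'rV[R]_N)
  (psi : 'rV[R]_N -> R) (s : R) : \bar R :=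
  ereal_sup [set (A x phi s)%:E | phi in [set phi | X phi /\ fle psi phi]].

From HB Require Import structures.
From mathcomp Require Import all_boot all_order all_algebra.
From mathcomp Require Import all_classical all_reals all_analysis.
Set Implicit Arguments. Unset Strict Implicit. Unset Printing Implicit Defensive.
Import Order.TTheory GRing.Theory Num.Theory.
Import numFieldNormedType.Exports.
Local Open Scope classical_set_scope.
Local Open Scope ring_scope.

(* Since [s |-> A x phi s] is nondecreasing with unique zero [a x phi], the
   sign of [A x phi (u x)] is decided by comparing [u x] with [a x phi]; and a
   supremum (infimum) of reals lies below (above) a real number exactly when
   each of its elements does.  So all four conditions say the same thing
   pointwise. *)

Lemma ereal_sup_image_le (R : realType) (T : Type) (P : set T) (f : T -> R) (c : R) :
  (ereal_sup [set (f t)%:E | t in P] <= c%:E)%E <-> (forall t, P t -> f t <= c).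
Proof.
split=> [supPc t Pt | Pc].
- by rewrite -lee_fin; apply: le_trans supPc; apply: ereal_sup_ubound; exists t.
- by apply: ge_ereal_sup => _ [t Pt <-]; rewrite lee_fin; apply: Pc.
Qed.

Lemma ereal_inf_image_ge (R : realType) (T : Type) (P : set T) (f : T -> R) (c : R) :
  (c%:E <= ereal_inf [set (f t)%:E | t in P])%E <-> (forall t, P t -> c <= f t).
Proof.
split=> [infPc t Pt | Pc].
- by rewrite -lee_fin; apply: le_trans infPc _; apply: ereal_inf_lbound; exists t.
- by apply: le_ereal_inf_tmp => _ [t Pt <-]; rewrite lee_fin; apply: Pc.
Qed.

Section NondecreasingUniqueRoot.
Variables (R : realDomainType) (f : R -> R) (z : R).
Hypotheses (f_nd : {homo f : s t / s <= t}) (fz : f z = 0)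
  (root_uniq : forall s, f s = 0 -> s = z).

Lemma ge0_iff_root_le s : 0 <= f s <-> z <= s.
Proof.
split=> [fs_ge0 | /f_nd]; last by rewrite fz.
rewrite leNgt; apply/negP => lt_sz.
have fs0 : f s = 0 by apply/eqP; rewrite eq_le fs_ge0 -fz f_nd ?ltW.
by rewrite (root_uniq fs0) ltxx in lt_sz.
Qed.

Lemma le0_iff_le_root s : f s <= 0 <-> s <= z.
Proof.
split=> [fs_le0 | /f_nd]; last by rewrite fz.
rewrite leNgt; apply/negP => lt_zs.
have fs0 : f s = 0 by apply/eqP; rewrite eq_le fs_le0 -fz f_nd ?ltW.
by rewrite (root_uniq fs0) ltxx in lt_zs.
Qed.

End NondecreasingUniqueRoot.

Section ViscosityDefinitions.
Variables (R : realType) (N : nat) (Omega : set 'rV[R]_N)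
  (X : set ('rV[R]_N -> R)) (A : 'rV[R]_N -> ('rV[R]_N -> R) -> R -> R)
  (a : 'rV[R]_N -> ('rV[R]_N -> R) -> R).
Hypotheses (hb : forall x phi s1 s2, Omega x -> X phi ->
              s1 <= s2 -> A x phi s1 <= A x phi s2)
  (hc : forall x phi, Omega x -> X phi ->
          A x phi (a x phi) = 0 /\ (forall s, A x phi s = 0 -> s = a x phi)).

Lemma A_ge0_iff x phi s : Omega x -> X phi -> 0 <= A x phi s <-> a x phi <= s.
Proof.
move=> Ox Xphi; have [Aa0 Auniq] := hc Ox Xphi.
exact: ge0_iff_root_le (fun s1 s2 => @hb x phi s1 s2 Ox Xphi) Aa0 Auniq s.
Qed.

Lemma A_le0_iff x phi s : Omega x -> X phi -> A x phi s <= 0 <-> s <= a x phi.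
Proof.
move=> Ox Xphi; have [Aa0 Auniq] := hc Ox Xphi.
exact: le0_iff_le_root (fun s1 s2 => @hb x phi s1 s2 Ox Xphi) Aa0 Auniq s.
Qed.

Lemma supersolution_tfae (u : 'rV[R]_N -> R) :
  [<-> (forall x, Omega x -> forall phi, X phi -> fle phi u -> 0 <= A x phi (u x));
       (forall x, Omega x -> forall phi, X phi -> fle phi u -> a x phi <= u x);
       (forall x, Omega x -> (abar X a x u <= (u x)%:E)%E);
       (forall x, Omega x -> (0%:E <= Abar X A x u (u x))%E)].
Proof.
tfae=> H x Ox.
- by move=> phi Xphi phi_u; apply/A_ge0_iff => //; apply: H.
- by apply/ereal_sup_image_le => phi [Xphi phi_u]; apply: H.
- apply/ereal_inf_image_ge => phi [Xphi phi_u]; apply/A_ge0_iff => //.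
  by move/ereal_sup_image_le: (H x Ox); apply.
- by move=> phi Xphi phi_u; move/ereal_inf_image_ge: (H x Ox); apply.
Qed.

Lemma subsolution_tfae (u : 'rV[R]_N -> R) :
  [<-> (forall x, Omega x -> forall phi, X phi -> fle u phi -> A x phi (u x) <= 0);
       (forall x, Omega x -> forall phi, X phi -> fle u phi -> u x <= a x phi);
       (forall x, Omega x -> ((u x)%:E <= aunder X a x u)%E);
       (forall x, Omega x -> (Aunder X A x u (u x) <= 0%:E)%E)].
Proof.
tfae=> H x Ox.
- by move=> phi Xphi u_phi; apply/A_le0_iff => //; apply: H.
- by apply/ereal_inf_image_ge => phi [Xphi u_phi]; apply: H.
- apply/ereal_sup_image_le => phi [Xphi u_phi]; apply/A_le0_iff => //.
  by move/ereal_inf_image_ge: (H x Ox); apply.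
- by move=> phi Xphi u_phi; move/ereal_sup_image_le: (H x Ox); apply.
Qed.

End ViscosityDefinitions.

Theorem mainTheorem5 (R : realType) (N : nat)
  (Omega : set 'rV[R]_N) (g : 'rV[R]_N -> R)
  (X : set ('rV[R]_N -> R))
  (A : 'rV[R]_N -> ('rV[R]_N -> R) -> R -> R)
  (a : 'rV[R]_N -> ('rV[R]_N -> R) -> R)
  (hOmega : open Omega)
  (hX : X `<=` @Xbar R N)
  (ha : forall x phi1 phi2 s, Omega x -> X phi1 -> X phi2 ->
          fle phi1 phi2 -> A x phi2 s <= A x phi1 s)
  (hb : forall x phi s1 s2, Omega x -> X phi ->
          s1 <= s2 -> A x phi s1 <= A x phi s2)
  (hc : forall x phi, Omega x -> X phi ->
          A x phi (a x phi) = 0 /\ (forall s, A x phi s = 0 -> s = a x phi)) :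
  (forall u : 'rV[R]_N -> R, @Xbar R N u ->
     (forall y, ~ Omega y -> g y <= u y) ->
     [<-> (forall x, Omega x -> forall phi, X phi -> fle phi u -> 0 <= A x phi (u x));
          (forall x, Omega x -> forall phi, X phi -> fle phi u -> a x phi <= u x);
          (forall x, Omega x -> (abar X a x u <= (u x)%:E)%E);
          (forall x, Omega x -> (0%:E <= Abar X A x u (u x))%E)])
  /\
  (forall u : 'rV[R]_N -> R, @Xbar R N u ->
     (forall y, ~ Omega y -> u y <= g y) ->
     [<-> (forall x, Omega x -> forall phi, X phi -> fle u phi -> A x phi (u x) <= 0);
          (forall x, Omega x -> forall phi, X phi -> fle u phi -> u x <= a x phi);
          (forall x, Omega x -> ((u x)%:E <= aunder X a x u)%E);
          (forall x, Omega x -> (Aunder X A x u (u x) <= 0%:E)%E)]).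
Proof.
split=> u _ _; [exact: supersolution_tfae hb hc u | exact: subsolution_tfae hb hc u].
Qed.
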